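(* Every strongly $D$-continuous poset with complementation is pseudo-orthomodular. Every finite pseudo-orthomodular poset is strongly $D$-continuous.
   Context: For $M\subseteq P$, $U(M)$, $L(M)$ are the sets of upper and lower bounds; $U(a,b)=U(\{a,b\})$ etc. For $B,C\subseteq P$, $B\le C$ means $b\le c$ for all $b\in B$, $c\in C$. A poset with complementation is a bounded poset $(P,\le,{}',0,1)$ with antitone involution $'$ ($x\le y\Rightarrow y'\le x'$, $x''=x$) with $L(x,x')=\{0\}$, $U(x,x')=\{1\}$; it is pseudo-orthomodular if $L(U(L(x,y),y'),y)=L(x,y)$ for all $x,y$. It is strongly $D$-continuous if for all $B,C\subseteq P$ with $B\le C$: $\bigwedge_{\mathbf P}\{g\in P\mid g\in C\text{ or } g'\in B\}=0$ if and only if every lower bound of $C$ in $P$ is below every upper bound of $B$ in $P$. *)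

From Stdlib Require Import List.

Record PosetComp := {
  car :> Type;
  le : car -> car -> Prop;
  comp : car -> car;
  bot : car;
  top : car;
  le_refl : forall x, le x x;
  le_antisym : forall x y, le x y -> le y x -> x = y;
  le_trans : forall x y z, le x y -> le y z -> le x z;
  bot_le : forall x, le bot x;
  le_top : forall x, le x top;
  comp_antitone : forall x y, le x y -> le (comp y) (comp x);
  comp_invol : forall x, comp (comp x) = x;
  comp_L : forall x z, le z x -> le z (comp x) -> z = bot;
  comp_U : forall x z, le x z -> le (comp x) z -> z = top
}.

Section Defs.
Variable P : PosetComp.

Definition Lb (M : P -> Prop) : P -> Prop := fun z => forall m, M m -> le P z m.
Definition Ub (M : P -> Prop) : P -> Prop := fun z => forall m, M m -> le P m z.

Definition pair (a b : P) : P -> Prop := fun z => z = a \/ z = b.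

Definition add1 (M : P -> Prop) (a : P) : P -> Prop := fun z => M z \/ z = a.

Definition set_eq (A B : P -> Prop) : Prop := forall z, A z <-> B z.

Definition is_inf (M : P -> Prop) (a : P) : Prop :=
  Lb M a /\ forall b, Lb M b -> le P b a.

(* L(U(L(x,y), y'), y) = L(x,y) *)
Definition pseudo_orthomodular : Prop :=
  forall x y : P,
    set_eq (Lb (add1 (Ub (add1 (Lb (pair x y)) (comp P y))) y)) (Lb (pair x y)).

Definition strongly_D_continuous : Prop :=
  forall B C : P -> Prop,
    (forall b c, B b -> C c -> le P b c) ->
    (is_inf (fun g => C g \/ B (comp P g)) (bot P) <->
     forall l u, Lb C l -> Ub B u -> le P l u).

Definition finite_poset : Prop := exists l : list P, forall x : P, In x l.
End Defs.

(* For the first claim take B = L(x,y) and C = U(L(x,y),y') ∪ {y}: every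
   lower bound w of {g | g ∈ C or g' ∈ B} satisfies w' ∈ C, hence w ≤ w' and
   w = 0, so strong D-continuity puts L(C) below x ∈ U(B), which is the
   nontrivial inclusion of pseudo-orthomodularity.

   For the second claim, one direction of strong D-continuity holds in every
   poset with complementation.  For the other, pseudo-orthomodularity is
   extended from a single element y to an arbitrary subset T:
   L(U(L(S ∪ T) ∪ T') ∪ T) ⊆ L(S).  This goes by induction on L(T) along
   strictly growing sets, which terminates because P is finite: if some
   c ∈ T differs from 1, replacing T by U(L(T) ∪ {c'}) adds c' to L(T),
   and the single-element identity for y = c recovers L(T) from the new set. *)
From Stdlib Require Import List Lia Classical ClassicalEpsilon Wf_nat.

Section GrowthInduction.
Variable A : Type.

Definition missing (S : A -> Prop) (l : list A) : nat :=
  length (filter (fun a => if excluded_middle_informative (S a) then false else true) l).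

Lemma missing_le (S S' : A -> Prop) (l : list A) :
  (forall a, S a -> S' a) -> missing S' l <= missing S l.
Proof.
  intros HS. induction l as [|a l IH]; unfold missing in *; simpl; [lia|].
  destruct (excluded_middle_informative (S' a)), (excluded_middle_informative (S a));
    simpl; try lia.
  exfalso; auto.
Qed.

Lemma missing_lt (S S' : A -> Prop) (l : list A) (a : A) :
  (forall b, S b -> S' b) -> In a l -> ~ S a -> S' a -> missing S' l < missing S l.
Proof.
  intros HS Hin HSa HS'a. induction l as [|b l IH]; [destruct Hin|].
  pose proof (missing_le S S' l HS) as Hle. unfold missing in *; simpl.
  destruct Hin as [-> | Hin].
  - destruct (excluded_middle_informative (S' a)), (excluded_middle_informative (S a));
      simpl; try contradiction; lia.
  - specialize (IH Hin).
    destruct (excluded_middle_informative (S' b)), (excluded_middle_informative (S b));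
      simpl; try lia.
    exfalso; auto.
Qed.

Lemma growth_ind (l : list A) (Hl : forall a, In a l)
    (X : Type) (f : X -> A -> Prop) (Q : X -> Prop) :
  (forall x, (forall y, (forall a, f x a -> f y a) -> (exists a, f y a /\ ~ f x a) -> Q y) ->
     Q x) ->
  forall x, Q x.
Proof.
  intros step x.
  induction x as [x IH] using (induction_ltof1 _ (fun x => missing (f x) l)).
  apply step. intros y Hxy [a [Hya Hxa]].
  apply IH. exact (missing_lt (f x) (f y) l a Hxy (Hl a) Hxa Hya).
Qed.

End GrowthInduction.

Section Complementation.
Variable P : PosetComp.

Lemma comp_le_swap (a b : P) : le P (comp P a) b -> le P (comp P b) a.
Proof. intros H. apply comp_antitone in H. rewrite comp_invol in H. exact H. Qed.

Lemma le_comp_swap (a b : P) : le P a (comp P b) -> le P b (comp P a).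
Proof. intros H. apply comp_antitone in H. rewrite comp_invol in H. exact H. Qed.

Lemma le_comp_eq_bot (a : P) : le P a (comp P a) -> a = bot P.
Proof. exact (comp_L P a a (le_refl P a)). Qed.

Lemma comp_eq_bot (a : P) : comp P a = bot P -> a = top P.
Proof.
  intros Ha. apply (comp_U P (comp P a)); [rewrite Ha; apply bot_le | rewrite comp_invol; apply le_refl].
Qed.

Lemma Lb_pair (x y z : P) : le P z x -> le P z y -> Lb P (pair P x y) z.
Proof. intros zx zy m [-> | ->]; assumption. Qed.

Lemma is_inf_bot (M : P -> Prop) : (forall w, Lb P M w -> w = bot P) -> is_inf P M (bot P).
Proof.
  intros HM. split; [intros m _; apply bot_le|].
  intros w Hw. rewrite (HM w Hw). apply le_refl.
Qed.

Lemma is_inf_bot_Lb (M : P -> Prop) (w : P) : is_inf P M (bot P) -> Lb P M w -> w = bot P.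
Proof. intros [_ Hinf] Hw. apply le_antisym; [exact (Hinf w Hw) | apply bot_le]. Qed.

Lemma pseudo_orthomodular_of_incl :
  (forall x y z, Lb P (add1 P (Ub P (add1 P (Lb P (pair P x y)) (comp P y))) y) z ->
     Lb P (pair P x y) z) ->
  pseudo_orthomodular P.
Proof.
  intros Hincl x y z. split; [apply Hincl|].
  intros Hz m [Hm | ->].
  - apply Hm. left. exact Hz.
  - apply Hz. right. reflexivity.
Qed.

Lemma pseudo_orthomodular_of_strongly_D_continuous :
  strongly_D_continuous P -> pseudo_orthomodular P.
Proof.
  intros HS. apply pseudo_orthomodular_of_incl. intros x y z Hz.
  set (B := Lb P (pair P x y)).
  set (C := add1 P (Ub P (add1 P B (comp P y))) y).
  assert (HBC : forall b c, B b -> C c -> le P b c).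
  { intros b c Hb [Hc | ->]; [apply Hc; left; exact Hb | apply Hb; right; reflexivity]. }
  assert (Hinf : is_inf P (fun g => C g \/ B (comp P g)) (bot P)).
  { apply is_inf_bot. intros w Hw.
    assert (Hcw : C (comp P w)).
    { left. intros m [Hm | ->].
      - apply le_comp_swap, Hw. right. unfold B. rewrite comp_invol. exact Hm.
      - apply comp_antitone, Hw. left. right. reflexivity. }
    apply le_comp_eq_bot, Hw. left. exact Hcw. }
  apply Lb_pair.
  - apply (proj1 (HS B C HBC) Hinf z x Hz). intros b Hb. apply Hb. left. reflexivity.
  - apply Hz. right. reflexivity.
Qed.

Lemma inf_bot_of_Lb_le_Ub (B C : P -> Prop) :
  (forall l u, Lb P C l -> Ub P B u -> le P l u) ->
  is_inf P (fun g => C g \/ B (comp P g)) (bot P).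
Proof.
  intros H. apply is_inf_bot. intros b Hb. apply le_comp_eq_bot, H.
  - intros c Hc. apply Hb. left. exact Hc.
  - intros b0 Hb0. apply le_comp_swap, Hb. right. rewrite comp_invol. exact Hb0.
Qed.

End Complementation.

Section PseudoOrthomodular.
Variable P : PosetComp.
Hypothesis HP : pseudo_orthomodular P.

Lemma pseudo_orthomodular_le (x y z : P) :
  le P z y ->
  (forall m, (forall q, le P q x -> le P q y -> le P q m) -> le P (comp P y) m -> le P z m) ->
  le P z x.
Proof.
  intros zy Hz.
  enough (Hzxy : Lb P (pair P x y) z) by (apply Hzxy; left; reflexivity).
  apply (HP x y z). intros m [Hm | ->]; [|exact zy].
  apply Hz.
  - intros q qx qy. apply Hm. left. exact (Lb_pair P x y q qx qy).
  - apply Hm. right. reflexivity.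
Qed.

Definition grow (T : P -> Prop) (c : P) : P -> Prop := Ub P (add1 P (Lb P T) (comp P c)).

Lemma Lb_grow (T : P -> Prop) (c q : P) : Lb P T q -> Lb P (grow T c) q.
Proof. intros Hq r Hr. apply Hr. left. exact Hq. Qed.

Lemma Lb_grow_comp (T : P -> Prop) (c : P) : Lb P (grow T c) (comp P c).
Proof. intros r Hr. apply Hr. right. reflexivity. Qed.

Lemma not_Lb_comp (T : P -> Prop) (c : P) : T c -> c <> top P -> ~ Lb P T (comp P c).
Proof.
  intros Tc Hc Hcc. apply Hc, comp_eq_bot, le_comp_eq_bot.
  rewrite comp_invol. exact (Hcc c Tc).
Qed.

Lemma Lb_grow_le (T : P -> Prop) (c q : P) :
  T c -> Lb P (grow T c) q -> le P q c -> Lb P T q.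
Proof.
  intros Tc Hq qc t Tt. apply (pseudo_orthomodular_le t c q qc).
  intros m Hm Hcm. apply Hq. intros m0 [Hm0 | ->]; [|exact Hcm].
  apply Hm; [apply Hm0, Tt | apply Hm0, Tc].
Qed.

(* The case T = {y}, S = {x} is pseudo-orthomodularity itself: the hypothesis
   on z says z ∈ L(U(L(S ∪ T) ∪ T') ∪ T), where T' = {t' | t ∈ T}. *)
Lemma pseudo_orthomodular_sets (Hfin : finite_poset P) (T S : P -> Prop) (z : P) :
  Lb P T z ->
  (forall w, (forall q, Lb P S q -> Lb P T q -> le P q w) -> Lb P T (comp P w) -> le P z w) ->
  Lb P S z.
Proof.
  destruct Hfin as [l Hl]. revert S z.
  induction T as [T IH] using (growth_ind P l Hl _ (Lb P)).
  intros S z Hz Hw.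
  destruct (classic (exists c, T c /\ c <> top P)) as [[c [Tc Hc]] | Htop].
  - apply (IH (grow T c) (Lb_grow T c)); [|apply Lb_grow, Hz|].
    { exists (comp P c). split; [apply Lb_grow_comp | exact (not_Lb_comp T c Tc Hc)]. }
    intros w HwS HwR.
    apply (pseudo_orthomodular_le w c z (Hz c Tc)). intros m Hm Hcm.
    apply Hw.
    + intros q HqS HqT. apply Hm; [apply HwS, Lb_grow; assumption | apply HqT, Tc].
    + apply (Lb_grow_le T c); [exact Tc | | apply comp_le_swap, Hcm].
      intros r Hr. apply comp_le_swap, Hm.
      * apply comp_le_swap, HwR, Hr.
      * apply comp_le_swap, Hr. right. reflexivity.
  - intros s Hs. apply Hw; [intros q Hq _; apply Hq, Hs|].
    intros t Tt. replace t with (top P); [apply le_top|].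
    apply NNPP. intros Ht. apply Htop. exists t. auto.
Qed.

Lemma Lb_le_Ub_of_inf_bot (Hfin : finite_poset P) (B C : P -> Prop) :
  (forall b c, B b -> C c -> le P b c) ->
  is_inf P (fun g => C g \/ B (comp P g)) (bot P) ->
  forall l u, Lb P C l -> Ub P B u -> le P l u.
Proof.
  intros HBC Hinf l u Hl Hu.
  apply (pseudo_orthomodular_sets Hfin C (Ub P B) l Hl); [|exact Hu].
  intros w HwB HwC.
  replace w with (top P); [apply le_top|]. symmetry.
  apply comp_eq_bot, (is_inf_bot_Lb P _ _ Hinf). intros g [Cg | Bg].
  - exact (HwC g Cg).
  - apply comp_le_swap, HwB.
    + intros b Hb. exact (Hb _ Bg).
    + intros c Cc. exact (HBC _ c Bg Cc).
Qed.

End PseudoOrthomodular.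

Theorem corollary5 :
  (forall P : PosetComp, strongly_D_continuous P -> pseudo_orthomodular P) /\
  (forall P : PosetComp, finite_poset P -> pseudo_orthomodular P ->
     strongly_D_continuous P).
Proof.
  split.
  - exact pseudo_orthomodular_of_strongly_D_continuous.
  - intros P Hfin HP B C HBC. split.
    + exact (Lb_le_Ub_of_inf_bot P HP Hfin B C HBC).
    + exact (inf_bot_of_Lb_le_Ub P B C).
Qed.
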